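(* Let $n,d\ge1$ be integers and let $A$ be a non-empty subset of $]n[=\{1,\dots,n\}$. If $s_A(\mathbb{Z}_n^d)=d_A(\mathbb{Z}_n^d)+n-1$, then $ZS_A(\mathbb{Z}_n^d)=d_A(\mathbb{Z}_n^d)+n^d-1$.
   Context: For an integer $x\ge1$, $]x[=\{1,2,\dots,x\}$. Let $G$ be a finite abelian group (written additively) of exponent $n$ and let $\emptyset\ne A\subseteq\,]n[$. The constant $d_A(G)$ is the least positive integer $t$ such that for every sequence $g_1,\dots,g_t$ in $G$ there exist $\ell\ge1$, indices $1\le i_1<\dots<i_\ell\le t$ and $a_1,\dots,a_\ell\in A$ (repetitions allowed) with $\sum_{j=1}^{\ell}a_jg_{i_j}=0$. The constant $ZS_A(G)$ (resp. $s_A(G)$) is the least positive integer $t$ such that every sequence $g_1,\dots,g_t$ in $G$ has a subsequence $g_{i_1},\dots,g_{i_m}$ ($i_1<\dots<i_m$) with $m=|G|$ (resp. $m=n$) and elements $a_1,\dots,a_m\in A$ (repetitions allowed) with $\sum_{j=1}^m a_jg_{i_j}=0$ in $G$. *)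

From mathcomp Require Import all_boot.
Set Implicit Arguments. Unset Strict Implicit. Unset Printing Implicit Defensive.

(* A weighted sum \sum a_j g_j is zero in Z_n^d iff every coordinate of the
   integer sum is divisible by n. *)
Definition Zn_d (n d : nat) := {ffun 'I_d -> 'I_n}.

Definition A_zero_sum (n d : nat) (A : seq nat) (t : nat)
    (g : 'I_t -> Zn_d n d) (I : {set 'I_t}) : Prop :=
  exists a : 'I_t -> nat,
    (forall i, i \in I -> a i \in A) /\
    (forall k : 'I_d, n %| \sum_(i in I) a i * nat_of_ord (g i k)).

Definition dA_prop (n d : nat) (A : seq nat) (t : nat) : Prop :=
  forall g : 'I_t -> Zn_d n d,
    exists I : {set 'I_t}, I != set0 /\ A_zero_sum A g I.

Definition len_prop (n d : nat) (A : seq nat) (m t : nat) : Prop :=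
  forall g : 'I_t -> Zn_d n d,
    exists I : {set 'I_t}, #|I| = m /\ A_zero_sum A g I.

Definition least_pos (P : nat -> Prop) (t : nat) : Prop :=
  0 < t /\ P t /\ forall t', 0 < t' -> P t' -> t <= t'.

Definition is_dA (n d : nat) (A : seq nat) (t : nat) : Prop :=
  least_pos (@dA_prop n d A) t.
(* s_A(Z_n^d): subsequences of length n = exponent of Z_n^d *)
Definition is_sA (n d : nat) (A : seq nat) (t : nat) : Prop :=
  least_pos (@len_prop n d A n) t.
(* ZS_A(Z_n^d): subsequences of length |G| = n^d *)
Definition is_ZSA (n d : nat) (A : seq nat) (t : nat) : Prop :=
  least_pos (@len_prop n d A (n ^ d)) t.

(* Upper bound: a zero-sum subsequence of length |G| = n^d is assembled from
   n^(d-1) disjoint zero-sum blocks of length n, extracted greedily; this needs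
   n^d - n + s_A = d_A + n^d - 1 terms.
   Lower bound: a sequence of length d_A - 1 without non-empty zero-sum
   subsequence, padded with n^d - 1 zeros, has no zero-sum subsequence of
   length n^d, since any such subsequence meets the unpadded part. *)

From mathcomp Require Import all_boot.
From mathcomp Require Import zify.

Set Implicit Arguments.
Unset Strict Implicit.
Unset Printing Implicit Defensive.

Section ZeroSums.

Variables (n d : nat) (A : seq nat).

Lemma A_zero_sumU t (g : 'I_t -> Zn_d n d) (I1 I2 : {set 'I_t}) :
  [disjoint I1 & I2] -> A_zero_sum A g I1 -> A_zero_sum A g I2 ->
  A_zero_sum A g (I1 :|: I2).
Proof.
move=> dis [a1 [Ha1 S1]] [a2 [Ha2 S2]].
exists (fun i => if i \in I1 then a1 i else a2 i); split.
  by move=> i; rewrite in_setU; case: ifP => [iI1 _|_ /= iI2]; [apply: Ha1|apply: Ha2].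
move=> k; rewrite (eq_bigl [predU I1 & I2]); last by move=> i; rewrite in_setU.
rewrite bigU //=; apply: dvdn_add.
  by rewrite (eq_bigr (fun i => a1 i * g i k)) // => i ->.
rewrite (eq_bigr (fun i => a2 i * g i k)) // => i iI2.
by rewrite (disjointFl dis iI2).
Qed.

Lemma len_prop_in m t t' (g : 'I_t' -> Zn_d n d) (U : {set 'I_t'}) :
  len_prop n d A m t -> t <= #|U| ->
  exists I : {set 'I_t'}, [/\ I \subset U, #|I| = m & A_zero_sum A g I].
Proof.
move=> Hm le_tU.
pose h (j : 'I_t) : 'I_t' := enum_val (widen_ord le_tU j).
have h_inj : injective h.
  by move=> x y /enum_val_inj/(congr1 val) /= /val_inj.
have [J [cardJ [a [Ha Hsum]]]] := Hm (g \o h).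
exists (h @: J); split; first by apply/subsetP => _ /imsetP [j _ ->]; apply: enum_valP.
  by rewrite card_imset.
pose a' i := if [pick j in J | h j == i] is Some j then a j else 0.
have a'E j : j \in J -> a' (h j) = a j.
  move=> jJ; rewrite /a'; case: pickP => [j' /andP [_ /eqP/h_inj -> //]|/(_ j)].
  by rewrite jJ eqxx.
exists a'; split; first by move=> _ /imsetP [j jJ ->]; rewrite a'E //; apply: Ha.
move=> k; rewrite big_imset /=; last by move=> x y _ _ /h_inj.
by rewrite (eq_bigr (fun j => a j * g (h j) k)) // => j jJ; rewrite a'E.
Qed.

Lemma len_prop_monotone m t t' :
  len_prop n d A m t -> t <= t' -> len_prop n d A m t'.
Proof.
move=> Hm le_tt' g; rewrite -[t'](card_ord t') -cardsT in le_tt'.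
by have [I [_ cardI zI]] := len_prop_in g Hm le_tt'; exists I.
Qed.

Lemma len_prop_mul_in m t t' (g : 'I_t' -> Zn_d n d) k (U : {set 'I_t'}) :
  len_prop n d A m t -> k * m + t <= #|U| ->
  exists I : {set 'I_t'}, [/\ I \subset U, #|I| = k.+1 * m & A_zero_sum A g I].
Proof.
move=> Hm; elim: k U => [|k IHk] U leU.
  by rewrite mul1n; apply: len_prop_in Hm _; rewrite add0n in leU.
have [I1 [sI1U cardI1 zI1]] := len_prop_in g Hm (leq_trans (leq_addl _ _) leU).
have [|I2 [sI2 cardI2 zI2]] := IHk (U :\: I1).
  by rewrite cardsD (setIidPr sI1U) cardI1; move: leU; rewrite mulSn; lia.
have dis : [disjoint I1 & I2].
  by rewrite disjoint_sym disjoints_subset (subset_trans sI2) // setDE subsetIr.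
exists (I1 :|: I2); split; last exact: A_zero_sumU.
  by rewrite subUset sI1U (subset_trans sI2) ?subsetDl.
by rewrite cardsU (disjoint_setI0 dis) cards0 cardI1 cardI2 mulSn; lia.
Qed.

Lemma len_prop_mul m t k :
  len_prop n d A m t -> len_prop n d A (k.+1 * m) (k * m + t).
Proof.
move=> Hm g.
have [|I [_ cardI zI]] := len_prop_mul_in g (k := k) (U := setT) Hm.
  by rewrite cardsT card_ord.
by exists I.
Qed.

Hypothesis n_gt0 : 0 < n.

Let zero : Zn_d n d := [ffun=> Ordinal n_gt0].

Lemma len_prop_ge m t : len_prop n d A m t -> m <= t.
Proof.
by move=> /(_ (fun=> zero)) [I [<- _]]; rewrite -[t in _ <= t]card_ord max_card.
Qed.

Lemma dA_prop_gt0 t : dA_prop n d A t -> 0 < t.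
Proof.
by case: t => // /(_ (fun=> zero)) [I [/set0Pn [[i]]]].
Qed.

Lemma len_prop_pad m k :
  0 < m -> len_prop n d A m (k + m.-1) -> dA_prop n d A k.
Proof.
move=> m_gt0 Hm g0.
pose g (i : 'I_(k + m.-1)) := if split i is inl j then g0 j else zero.
have [I [cardI [a [Ha Hsum]]]] := Hm g.
exists [set j | lshift m.-1 j \in I]; split.
  apply/negP => /eqP /setP noL.
  have sub : I \subset [set rshift k j | j in 'I_m.-1].
    apply/subsetP => i iI; rewrite -(splitK i); case: splitP => j ij /=.
      have := noL j; rewrite !inE.
      by rewrite (_ : lshift m.-1 j = i) ?iI //; apply: val_inj.
    exact: imset_f.
  have := leq_trans (subset_leq_card sub) (leq_imset_card _ _).
  by rewrite cardI card_ord; lia.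
exists (a \o lshift m.-1); split; first by move=> j; rewrite inE => /Ha.
move=> c; have := Hsum c; rewrite big_mkcond big_split_ord /=.
rewrite [X in _ + X]big1 ?addn0; last first.
  by move=> j _; case: ifP => // _; rewrite /g (unsplitK (inr _ j)) ffunE muln0.
rewrite [in X in _ -> X]big_mkcond; congr (_ %| _); apply: eq_bigr => j _.
by rewrite inE /g (unsplitK (inl _ j)).
Qed.

Lemma is_dA_len_prop m t dA :
  is_dA n d A dA -> 0 < m -> len_prop n d A m t -> dA + m.-1 <= t.
Proof.
move=> [_ [_ min_dA]] m_gt0 Hm.
have le_mt := len_prop_ge Hm.
have HdA : dA_prop n d A (t - m.-1) by apply: (len_prop_pad m_gt0); rewrite subnK //; lia.
by have := min_dA _ (dA_prop_gt0 HdA) HdA; lia.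
Qed.

End ZeroSums.

Theorem lemma3p1 (n d : nat) (A : seq nat) (dA sA ZSA : nat) :
  1 <= n -> 1 <= d ->
  A != [::] -> (forall a, a \in A -> 1 <= a <= n) ->
  is_dA n d A dA -> is_sA n d A sA -> is_ZSA n d A ZSA ->
  sA = dA + n - 1 ->
  ZSA = dA + n ^ d - 1.
Proof.
move=> n_gt0 d_gt0 _ _ HdA [_ [HsA _]] [_ [HZ min_ZSA]] sAE.
have nd_gt0 : 0 < n ^ d by rewrite expn_gt0 n_gt0.
apply/eqP; rewrite eqn_leq; apply/andP; split; last first.
  by have := is_dA_len_prop n_gt0 HdA nd_gt0 HZ; lia.
have dA_gt0 : 0 < dA by case: HdA.
apply: min_ZSA; first lia.
have nd : n ^ d = (n ^ d.-1).-1.+1 * n by rewrite prednK ?expn_gt0 ?n_gt0 // -expnSr prednK.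
have := len_prop_mul (k := (n ^ d.-1).-1) HsA; rewrite -nd.
move/len_prop_monotone; apply; rewrite sAE; move: nd; rewrite mulSn; lia.
Qed.
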